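(* Let $p_0(x)=1/\sqrt\pi$, $p_n(\cos\theta)=\sqrt{2/\pi}\cos(n\theta)$ ($n\ge1$) be the orthonormal Chebyshev polynomials of the first kind. For $n\in\mathbb{N}$ and $x\in(-1,1)$ let $\lambda_n(x)=\big(\sum_{i=0}^{n-1}p_i^2(x)\big)^{-1}$, $\Psi_{n,j}(x)=\lambda_n(x)p_{j-1}^2(x)$ ($j=1,\dots,n$), $\mathcal S(\bm\Psi_n(x))=-\sum_{j=1}^n\Psi_{n,j}(x)\log\Psi_{n,j}(x)$, and $\mathcal D_\infty(x)=\lim_{n\to\infty}\big(\log n-\mathcal S(\bm\Psi_n(x))\big)$. Let $x=\cos\theta$ with $\theta/\pi=s/k$, where $s,k\in\mathbb{N}$, $s<k$, $\operatorname{GCD}(s,k)=1$. Then $$\mathcal D_\infty(x)=\begin{cases}1-\log2+\mathcal R\!\left(\frac1k\right)>1-\log2, & k \text{ even},\\[2mm] 1-\log2+2\Big[\mathcal R\!\left(\frac1{2k}\right)-\frac12\mathcal R\!\left(\frac1k\right)\Big]<1-\log2, & k\text{ odd},\end{cases}$$ where $\mathcal R(y)=-y\big(\psi(1-y)+2\gamma+\psi(1+y)\big)$ for $|y|<1$.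
   Context: $\psi=\Gamma'/\Gamma$ is the digamma function and $\gamma$ is the Euler–Mascheroni constant; equivalently $\mathcal R(y)=2\sum_{m\ge1}\zeta(2m+1)y^{2m+1}$ for $|y|<1$, with $\zeta$ the Riemann zeta function. $\theta\in(0,\pi)$. $\operatorname{GCD}$ is the greatest common divisor. *)

From Stdlib Require Import Reals.
From Coquelicot Require Import Coquelicot.
Open Scope R_scope.

Definition cheb (n : nat) (x : R) : R :=
  match n with
  | O => / sqrt PI
  | S _ => sqrt (2 / PI) * cos (INR n * acos x)
  end.

Definition lambda_n (n : nat) (x : R) : R :=
  / sum_n (fun i => (cheb i x) ^ 2) (n - 1).

Definition Psi (n j : nat) (x : R) : R := lambda_n n x * (cheb (j - 1) x) ^ 2.

(* Shannon entropy S(Psi_n(x)) = - sum_{j=1}^n Psi_{n,j} log Psi_{n,j}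
   (Stdlib's ln 0 = 0, so the convention 0 log 0 = 0 holds). *)
Definition entropy (n : nat) (x : R) : R :=
  - sum_n (fun i => Psi n (S i) x * ln (Psi n (S i) x)) (n - 1).

Definition Dn (n : nat) (x : R) : R := ln (INR n) - entropy n x.

Definition euler_gamma : R :=
  real (Lim_seq (fun n => sum_n (fun i => / INR (S i)) n - ln (INR (S n)))).

Definition digamma (z : R) : R :=
  - euler_gamma + Series (fun n => / INR (S n) - / (INR n + z)).

Definition Rfun (y : R) : R :=
  - y * (digamma (1 - y) + 2 * euler_gamma + digamma (1 + y)).

From Stdlib Require Import Reals Lra Lia.
From Coquelicot Require Import Coquelicot.
Open Scope R_scope.

(* For [x = cos theta], [theta = pi s / k], the squared Chebyshev weights are [p_0^2 = 1/pi]
   and [p_j^2 = w_j / pi] with [w_j = 1 + cos (2 j theta)], a [k]-periodic sequence of mean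
   [1].  Writing [log n - S(Psi_n)] through the Cesaro means of [p_j^2] and [p_j^2 log p_j^2],
   periodicity gives [D_oo = (1/k) sum_(j<k) w_j log w_j].  Expand [log (2 w_j) / 2] in its
   Fourier series [sum_m (-1)^m cos ((m+1) 2 j theta) / (m+1)] (Abel's theorem) and sum over
   [j]: since [gcd s k = 1], [sum_(j<k) cos (2 n j theta)] is [k] when [k | n] and [0]
   otherwise, so in each block of [k] Fourier terms only the ends survive.  Summing blocks
   leaves [sum_q (+-1)^q / (q k ((q k)^2 - 1))], which is [R(1/k) / 2] for even [k]; for odd [k]
   the alternating series splits into [R(1/(2k)) - R(1/k) / 2].  The signs then come from
   [R(y) = sum_n 2 y^3 / (n (n^2 - y^2))]: it is positive and [2 R(y/2) < R(y)]. *)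

Fixpoint sum_lt (f : nat -> R) (n : nat) : R :=
  match n with O => 0 | S n => sum_lt f n + f n end.

Lemma sum_lt_ext (f g : nat -> R) n :
  (forall i, (i < n)%nat -> f i = g i) -> sum_lt f n = sum_lt g n.
Proof. induction n; intro H; simpl; auto. rewrite IHn, H; auto. Qed.

Lemma sum_lt_plus f g n : sum_lt (fun i => f i + g i) n = sum_lt f n + sum_lt g n.
Proof. induction n; simpl; [ring | rewrite IHn; ring]. Qed.

Lemma sum_lt_scal a f n : sum_lt (fun i => a * f i) n = a * sum_lt f n.
Proof. induction n; simpl; [ring | rewrite IHn; ring]. Qed.

Lemma sum_lt_const a n : sum_lt (fun _ => a) n = INR n * a.
Proof. induction n; simpl sum_lt; [simpl; ring | rewrite IHn, S_INR; ring]. Qed.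

Lemma sum_lt_add f a b :
  sum_lt f (a + b) = sum_lt f a + sum_lt (fun i => f (a + i)%nat) b.
Proof.
  induction b; simpl.
  - rewrite Nat.add_0_r; ring.
  - rewrite Nat.add_succ_r; simpl. rewrite IHb. ring.
Qed.

Lemma sum_lt_Sl f n : sum_lt f (S n) = f 0%nat + sum_lt (fun i => f (S i)) n.
Proof. replace (S n) with (1 + n)%nat by lia. rewrite sum_lt_add. simpl. ring. Qed.

Lemma sum_n_sum_lt (f : nat -> R) N : sum_n f N = sum_lt f (S N).
Proof.
  induction N.
  - rewrite sum_O. simpl. ring.
  - rewrite sum_Sn, IHN. reflexivity.
Qed.

Lemma sum_lt_indicator f a n : (a < n)%nat ->
  sum_lt (fun i => f i * (if Nat.eqb i a then 1 else 0)) n = f a.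
Proof.
  induction n; intro Ha; [lia |]. simpl.
  destruct (Nat.eq_dec a n) as [-> | Hne].
  - rewrite Nat.eqb_refl, (sum_lt_ext _ (fun _ => 0)), sum_lt_const; [ring |].
    intros i Hi. replace (Nat.eqb i n) with false by (symmetry; apply Nat.eqb_neq; lia).
    ring.
  - replace (Nat.eqb n a) with false by (symmetry; apply Nat.eqb_neq; lia).
    rewrite IHn by lia. ring.
Qed.

Lemma sum_lt_swap (F : nat -> nat -> R) N K :
  sum_lt (fun j => sum_lt (F j) N) K = sum_lt (fun m => sum_lt (fun j => F j m) K) N.
Proof.
  induction N; simpl.
  - rewrite sum_lt_const. ring.
  - rewrite sum_lt_plus, IHN. reflexivity.
Qed.

Lemma sum_lt_nonneg f n : (forall i, 0 <= f i) -> 0 <= sum_lt f n.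
Proof. intro Hf. induction n; simpl; [lra | specialize (Hf n); lra]. Qed.

Lemma sum_lt_ge_term f n i : (forall j, 0 <= f j) -> (i < n)%nat -> f i <= sum_lt f n.
Proof.
  intros Hf Hi. induction n; [lia |]. simpl.
  destruct (Nat.eq_dec i n) as [-> | Hne].
  - pose proof (sum_lt_nonneg f n Hf). lra.
  - specialize (IHn ltac:(lia)). specialize (Hf n). lra.
Qed.

Lemma sum_lt_periodic f k : (forall i, f (i + k)%nat = f i) ->
  forall a, sum_lt (fun i => f (a + i)%nat) k = sum_lt f k.
Proof.
  intros Hf a. induction a.
  - reflexivity.
  - rewrite <- IHa.
    pose proof (sum_lt_Sl (fun i => f (a + i)%nat) k) as E. simpl in E.
    rewrite Nat.add_0_r, Hf in E.
    rewrite (sum_lt_ext (fun i => f (S a + i)%nat) (fun i => f (a + S i)%nat))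
      by (intros; f_equal; lia).
    lra.
Qed.

Lemma is_lim_seq_sum_lt (u : nat -> nat -> R) (l : nat -> R) K :
  (forall j, (j < K)%nat -> is_lim_seq (u j) (l j)) ->
  is_lim_seq (fun M => sum_lt (fun j => u j M) K) (sum_lt l K).
Proof.
  induction K; intro H; simpl.
  - apply is_lim_seq_const.
  - apply is_lim_seq_plus'; [apply IHK; intros |]; apply H; lia.
Qed.

Lemma is_lim_seq_inv_S : is_lim_seq (fun n => / INR (S n)) 0.
Proof.
  pose proof (is_lim_seq_inv _ _ is_lim_seq_INR ltac:(discriminate)) as H.
  exact (proj1 (is_lim_seq_incr_1 _ _) H).
Qed.

Lemma is_lim_seq_fin_unique (u : nat -> R) (l1 l2 : R) :
  is_lim_seq u l1 -> is_lim_seq u l2 -> l1 = l2.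
Proof.
  intros H1 H2. apply is_lim_seq_unique in H1, H2. rewrite H1 in H2. now injection H2.
Qed.

Lemma is_lim_seq_plus_scal_inv_S (L a : R) :
  is_lim_seq (fun n => L + a * / INR (S n)) L.
Proof.
  pose proof (is_lim_seq_scal_l _ a 0 is_lim_seq_inv_S) as H0.
  simpl in H0. rewrite Rmult_0_r in H0.
  pose proof (is_lim_seq_plus' _ _ L 0 (is_lim_seq_const L) H0) as H.
  rewrite Rplus_0_r in H. exact H.
Qed.

Lemma continuity_pt_of_is_derive f x l : is_derive f x l -> continuity_pt f x.
Proof.
  intro H. apply continuity_pt_filterlim, (ex_derive_continuous f x). exists l; exact H.
Qed.

Lemma increment_le_of_derive_le (f f' g g' : R -> R) (a b : R) : a <= b ->
  (forall r, a <= r <= b -> is_derive f r (f' r)) ->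
  (forall r, a <= r <= b -> is_derive g r (g' r)) ->
  (forall r, a <= r <= b -> f' r <= g' r) ->
  f b - f a <= g b - g a.
Proof.
  intros Hab Hf Hg Hle.
  assert (D : forall r, Rmin a b <= r <= Rmax a b ->
            is_derive (fun r => f r - g r) r (f' r - g' r)).
  { intros r Hr. rewrite Rmin_left, Rmax_right in Hr by lra.
    apply (is_derive_minus f g); [apply Hf | apply Hg]; lra. }
  destruct (MVT_gen (fun r => f r - g r) a b (fun r => f' r - g' r)) as [c [Hc E]].
  - intros r Hr. apply D. split; apply Rlt_le, Hr.
  - intros r Hr. exact (continuity_pt_of_is_derive _ _ _ (D r Hr)).
  - rewrite Rmin_left, Rmax_right in Hc by lra. specialize (Hle c Hc). nra.
Qed.

Lemma abs_increment_le_of_derive (f f' g g' : R -> R) (a b : R) : a <= b ->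
  (forall r, a <= r <= b -> is_derive f r (f' r)) ->
  (forall r, a <= r <= b -> is_derive g r (g' r)) ->
  (forall r, a <= r <= b -> Rabs (f' r) <= g' r) ->
  Rabs (f b - f a) <= g b - g a.
Proof.
  intros Hab Hf Hg Hle. apply Rabs_le. split.
  - enough (- g b - - g a <= f b - f a) by lra.
    apply (increment_le_of_derive_le (fun r => - g r) (fun r => - g' r) f f'); auto.
    + intros r Hr. exact (is_derive_opp g r (g' r) (Hg r Hr)).
    + intros r Hr. specialize (Hle r Hr). apply Rabs_le_between in Hle. lra.
  - apply (increment_le_of_derive_le f f' g g'); auto.
    intros r Hr. specialize (Hle r Hr). apply Rabs_le_between in Hle. lra.
Qed.

(** * The Fourier series of [ln (2 + 2 cos phi) / 2] *)

Definition log_cos_partial (phi : R) (M : nat) : R :=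
  sum_n (fun m => (-1)^m * cos (INR (S m) * phi) / INR (S m)) M.

Lemma cos_geometric_sum (phi r : R) (M : nat) :
  (1 + 2 * r * cos phi + r^2) * sum_n (fun m => (-r)^m * cos (INR (S m) * phi)) M
  = cos phi + r - (-r)^(S M) * cos (INR (S (S M)) * phi)
      + (-r)^(S (S M)) * cos (INR (S M) * phi).
Proof.
  induction M.
  - rewrite sum_O. simpl.
    replace ((1 + 1) * phi) with (phi + phi) by ring. rewrite cos_plus.
    replace (1 * phi) with phi by ring.
    pose proof (sin2_cos2 phi). unfold Rsqr in *.
    replace (sin phi * sin phi) with (1 - cos phi * cos phi) by lra. ring.
  - rewrite sum_Sn. change plus with Rplus. rewrite Rmult_plus_distr_l, IHM.
    replace (INR (S (S (S M))) * phi) with (INR (S (S M)) * phi + phi)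
      by (rewrite (S_INR (S (S M))); ring).
    replace (INR (S M) * phi) with (INR (S (S M)) * phi - phi)
      by (rewrite (S_INR (S M)); ring).
    rewrite cos_plus, cos_minus. simpl pow. ring.
Qed.

Lemma abs_pow_opp_cos_le r n t : 0 <= r -> Rabs ((-r)^n * cos t) <= r^n.
Proof.
  intro Hr. rewrite Rabs_mult, <- RPow_abs, Rabs_Ropp, Rabs_right by lra.
  pose proof (pow_le r n Hr). pose proof (COS_bound t).
  rewrite <- (Rmult_1_r (r^n)) at 2. apply Rmult_le_compat_l; [lra |].
  apply Rabs_le; lra.
Qed.

Lemma cos_geometric_remainder phi r d M :
  0 <= r <= 1 -> 0 < d <= 1 + 2 * r * cos phi + r^2 ->
  Rabs ((cos phi + r) / (1 + 2 * r * cos phi + r^2)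
        - sum_n (fun m => (-r)^m * cos (INR (S m) * phi)) M) <= 2 * r^(S M) / d.
Proof.
  intros Hr Hd. pose proof (cos_geometric_sum phi r M) as E.
  set (D := 1 + 2 * r * cos phi + r^2) in *.
  set (A := (-r)^(S M) * cos (INR (S (S M)) * phi)) in *.
  set (B := (-r)^(S (S M)) * cos (INR (S M) * phi)) in *.
  replace (sum_n _ M) with ((cos phi + r - A + B) / D)
    by (apply (Rmult_eq_reg_l D); [rewrite E; field |]; lra).
  replace ((cos phi + r) / D - (cos phi + r - A + B) / D) with ((A - B) / D)
    by (field; lra).
  assert (HA : Rabs A <= r^(S M)) by (apply abs_pow_opp_cos_le; lra).
  assert (HB : Rabs B <= r^(S M)).
  { apply Rle_trans with (r^(S (S M))); [apply abs_pow_opp_cos_le; lra |].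
    simpl. pose proof (pow_le r (S M) ltac:(lra)). simpl in *. nra. }
  unfold Rdiv. rewrite Rabs_mult, Rabs_inv, (Rabs_right D) by lra.
  apply Rmult_le_compat.
  - apply Rabs_pos.
  - left. apply Rinv_0_lt_compat. lra.
  - unfold Rminus. eapply Rle_trans; [apply Rabs_triang |]. rewrite Rabs_Ropp. lra.
  - apply Rinv_le_contravar; lra.
Qed.

Lemma is_derive_sum_n_pow (a : nat -> R) (M : nat) (r : R) :
  is_derive (fun t => sum_n (fun m => a m * t^(S m)) M) r
            (sum_n (fun m => a m * INR (S m) * r^m) M).
Proof.
  apply (is_derive_sum_n (fun m t => a m * t^(S m))).
  intros m _. auto_derive; auto. simpl. ring.
Qed.

Lemma is_derive_scal_pow_S_div (c : R) (n : nat) (r : R) :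
  is_derive (fun t => c * t^(S n) / INR (S n)) r (c * r^n).
Proof.
  assert (HS : INR (S n) <> 0) by (apply not_0_INR; discriminate).
  apply (is_derive_ext (fun t => c / INR (S n) * t^(S n))).
  - intro t. change (c / INR (S n) * t^(S n) = c * t^(S n) / INR (S n)). field. exact HS.
  - replace (c * r^n) with (c / INR (S n) * (INR (S n) * 1 * r^(pred (S n))))
      by (simpl pred; field; exact HS).
    apply is_derive_scal, (is_derive_pow (fun t => t)). auto_derive; auto.
Qed.

Lemma Rmin_le_cos_quadratic phi r : 0 <= r <= 1 ->
  Rmin (1/4) (1 + cos phi) <= 1 + 2 * r * cos phi + r^2.
Proof.
  intro Hr. pose proof (COS_bound phi). destruct (Rle_lt_dec r (1/2)).
  - apply Rle_trans with (1/4); [apply Rmin_l | nra].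
  - apply Rle_trans with (1 + cos phi); [apply Rmin_r | nra].
Qed.

(* Abel's argument: [ln (1 + 2 r cos phi + r^2) / 2] has the Fourier coefficients as Taylor
   coefficients, and the mean value theorem on [0, 1] turns the derivative bound of
   [cos_geometric_remainder] into a bound at [r = 1]. *)
Lemma log_cos_partial_error phi M : 0 < 1 + cos phi ->
  Rabs (log_cos_partial phi M - ln (2 + 2 * cos phi) / 2)
    <= 2 / Rmin (1/4) (1 + cos phi) * / INR (S (S M)).
Proof.
  intro Hc. set (c := cos phi) in *. set (d := Rmin (1/4) (1 + c)).
  assert (Hd : 0 < d) by (apply Rmin_glb_lt; lra).
  pose proof (Rmin_le_cos_quadratic phi) as Hden. fold c d in Hden.
  set (a := fun m => (-1)^m * cos (INR (S m) * phi) / INR (S m)).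
  set (K := INR (S (S M))).
  assert (HK : 0 < K) by apply lt_0_INR, Nat.lt_0_succ.
  set (h := fun r => sum_n (fun m => a m * r^(S m)) M - ln (1 + 2 * r * c + r^2) / 2).
  set (h' := fun r => sum_n (fun m => a m * INR (S m) * r^m) M
                      - (c + r) / (1 + 2 * r * c + r^2)).
  assert (E : h 1 - h 0 = log_cos_partial phi M - ln (2 + 2 * c) / 2).
  { unfold h, log_cos_partial.
    rewrite (sum_n_ext (fun m => a m * 1^(S m)) a)
      by (intro; rewrite pow1; apply Rmult_1_r).
    rewrite (sum_n_ext (fun m => a m * 0^(S m)) (fun _ => 0))
      by (intro; simpl; rewrite Rmult_0_l; apply Rmult_0_r).
    rewrite sum_n_const. replace (1 + 2 * 0 * c + 0^2) with 1 by ring.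
    replace (1 + 2 * 1 * c + 1^2) with (2 + 2 * c) by ring. rewrite ln_1. unfold a. lra. }
  rewrite <- E.
  replace (2 / d * / K) with (2 / d * 1^(S (S M)) / K - 2 / d * 0^(S (S M)) / K)
    by (rewrite pow1, pow_i by lia; field; lra).
  apply (abs_increment_le_of_derive h h' (fun r => 2 / d * r^(S (S M)) / K)
           (fun r => 2 / d * r^(S M))); [lra | | |].
  - intros r Hr. specialize (Hden r Hr). unfold h, h'.
    apply (is_derive_minus (fun r => sum_n (fun m => a m * r^(S m)) M)
             (fun r => ln (1 + 2 * r * c + r^2) / 2)).
    + apply is_derive_sum_n_pow.
    + unfold c in *. auto_derive; [lra | field; lra].
  - intros r _. apply is_derive_scal_pow_S_div.
  - intros r Hr. unfold h'.
    rewrite (sum_n_ext _ (fun m => (-r)^m * cos (INR (S m) * phi))).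
    + rewrite Rabs_minus_sym. replace (2 / d * r^(S M)) with (2 * r^(S M) / d) by (field; lra).
      apply cos_geometric_remainder; [lra | split; [lra | apply Hden; lra]].
    + intro m. change (a m * INR (S m) * r^m = (-r)^m * cos (INR (S m) * phi)).
      unfold a. replace (-r) with (-1 * r) by ring.
      rewrite Rpow_mult_distr. field. apply not_0_INR. discriminate.
Qed.

Lemma is_lim_seq_log_cos_partial phi : 0 < 1 + cos phi ->
  is_lim_seq (log_cos_partial phi) (ln (2 + 2 * cos phi) / 2).
Proof.
  intro Hc. set (L := ln (2 + 2 * cos phi) / 2). set (C := 2 / Rmin (1/4) (1 + cos phi)).
  apply is_lim_seq_le_le with (u := fun M => L + - C * / INR (S (S M)))
                              (w := fun M => L + C * / INR (S (S M))).
  - intro M. pose proof (log_cos_partial_error phi M Hc) as H.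
    apply Rabs_le_between in H. fold L C in H. lra.
  - exact (proj1 (is_lim_seq_incr_1 _ _) (is_lim_seq_plus_scal_inv_S L (- C))).
  - exact (proj1 (is_lim_seq_incr_1 _ _) (is_lim_seq_plus_scal_inv_S L C)).
Qed.

(** * [Rfun] as a series *)

Definition Rfun_term (y : R) (n : nat) : R :=
  2 * y^3 / (INR (S n) * (INR (S n)^2 - y^2)).

Lemma is_series_two_div_consecutive : is_series (fun n => 2 / (INR (S n) * INR (S (S n)))) 2.
Proof.
  change (is_lim_seq (sum_n (fun n => 2 / (INR (S n) * INR (S (S n))))) 2).
  apply (is_lim_seq_ext (fun M => 2 + (-2) * / INR (S (S M)))).
  - intro M. induction M.
    + rewrite sum_O. simpl. field.
    + rewrite sum_Sn. change plus with Rplus. rewrite <- IHM.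
      rewrite !S_INR. pose proof (pos_INR M). field. lra.
  - exact (proj1 (is_lim_seq_incr_1 _ _) (is_lim_seq_plus_scal_inv_S 2 (-2))).
Qed.

Lemma ex_series_digamma (z : R) : 0 < z -> ex_series (fun n => / INR (S n) - / (INR n + z)).
Proof.
  intro Hz. set (c := Rmin z 1).
  assert (Hc : 0 < c <= 1) by (split; [apply Rmin_glb_lt | apply Rmin_r]; lra).
  assert (Hcz : c <= z) by apply Rmin_l.
  apply (@ex_series_le R_AbsRing R_CompleteNormedModule _
           (fun n => Rabs (z - 1) / c * (2 / (INR (S n) * INR (S (S n)))))).
  - intro n. change norm with Rabs. pose proof (pos_INR n). rewrite !S_INR.
    replace (/ (INR n + 1) - / (INR n + z)) with ((z - 1) / ((INR n + 1) * (INR n + z)))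
      by (field; lra).
    unfold Rdiv. rewrite Rabs_mult, Rabs_inv, (Rabs_right (_ * _)) by nra.
    rewrite Rmult_assoc. apply Rmult_le_compat_l; [apply Rabs_pos |].
    replace (/ c * (2 * / ((INR n + 1) * (INR n + 1 + 1))))
      with (/ (c * ((INR n + 1) * (INR n + 1 + 1)) / 2)) by (field; lra).
    assert (c * (INR n + 1 + 1) / 2 <= INR n + z) by nra.
    apply Rinv_le_contravar; nra.
  - apply (ex_series_scal_l (V := R_NormedModule)). exists 2. apply is_series_two_div_consecutive.
Qed.

Lemma is_series_Rfun (y : R) : -1 < y < 1 -> is_series (Rfun_term y) (Rfun y).
Proof.
  intro Hy.
  set (A := fun n => / INR (S n) - / (INR n + (1 - y))).
  set (B := fun n => / INR (S n) - / (INR n + (1 + y))).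
  assert (HA : is_series A (Series A)) by (apply Series_correct, ex_series_digamma; lra).
  assert (HB : is_series B (Series B)) by (apply Series_correct, ex_series_digamma; lra).
  replace (Rfun y) with (- y * (Series A + Series B))
    by (unfold Rfun, digamma; fold A B; ring).
  apply (is_series_ext (fun n => - y * (A n + B n))).
  - intro n. change (- y * (A n + B n) = Rfun_term y n).
    unfold A, B, Rfun_term. pose proof (pos_INR n). rewrite S_INR.
    field. repeat split; nra.
  - exact (is_series_scal_l (V := R_NormedModule) _ _ _ (is_series_plus _ _ _ _ HA HB)).
Qed.

Lemma is_series_pos (a : nat -> R) (l : R) : (forall n, 0 < a n) -> is_series a l -> 0 < l.
Proof.
  intros Ha Hl. apply Rlt_le_trans with (a 0%nat); [apply Ha |].
  apply (is_lim_seq_le (fun _ => a 0%nat) (sum_n a) (a 0%nat) l).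
  - intro n. induction n.
    + rewrite sum_O. lra.
    + rewrite sum_Sn. change plus with Rplus. specialize (Ha (S n)). lra.
  - apply is_lim_seq_const.
  - exact Hl.
Qed.

Lemma Rfun_pos (y : R) : 0 < y < 1 -> 0 < Rfun y.
Proof.
  intro Hy. apply (is_series_pos (Rfun_term y)); [| apply is_series_Rfun; lra].
  intro n. unfold Rfun_term. pose proof (pos_INR n). rewrite S_INR.
  assert (0 < (INR n + 1)^2 - y^2) by nra.
  apply Rdiv_lt_0_compat; [pose proof (pow_lt y 3); lra | apply Rmult_lt_0_compat; lra].
Qed.

Lemma Rfun_half_lt (y : R) : 0 < y < 1 -> 2 * Rfun (y / 2) < Rfun y.
Proof.
  intro Hy.
  enough (0 < Rfun y - 2 * Rfun (y / 2)) by lra.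
  apply (is_series_pos (fun n => Rfun_term y n - 2 * Rfun_term (y / 2) n)).
  - intro n. unfold Rfun_term. pose proof (pos_INR n). rewrite S_INR.
    set (m := INR n + 1).
    assert (0 < m^2 - y^2) by (unfold m; nra).
    assert (0 < m^2 - (y / 2)^2) by (unfold m; nra).
    assert (0 < 2 * m^2 - y^2 / 2) by (unfold m; nra).
    replace (2 * y^3 / (m * (m^2 - y^2)) - 2 * (2 * (y / 2)^3 / (m * (m^2 - (y / 2)^2))))
      with (3 * y^3 * m / ((2 * m^2 - y^2 / 2) * (m^2 - y^2)))
      by (field; repeat split; unfold m in *; lra).
    apply Rdiv_lt_0_compat; [pose proof (pow_lt y 3); unfold m; nra |].
    apply Rmult_lt_0_compat; lra.
  - apply (is_series_minus (V := R_NormedModule)); [apply is_series_Rfun; lra |].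
    apply (is_series_scal_l (V := R_NormedModule)), is_series_Rfun. lra.
Qed.

(** * Cesàro means of periodic sequences *)

Lemma periodic_bounded (g : nat -> R) (k : nat) : (0 < k)%nat ->
  (forall i, g (i + k)%nat = g i) -> forall N, Rabs (g N) <= sum_lt (fun i => Rabs (g i)) k.
Proof.
  intros Hk Hg N. induction N as [N IH] using (well_founded_induction Wf_nat.lt_wf).
  destruct (Nat.lt_ge_cases N k) as [HN | HN].
  - apply (sum_lt_ge_term (fun i => Rabs (g i))); [intro; apply Rabs_pos | exact HN].
  - replace N with ((N - k) + k)%nat by lia. rewrite Hg. apply IH. lia.
Qed.

(* The deviation of the partial sums from their linear trend is itself periodic, hence bounded. *)
Lemma is_lim_seq_mean_periodic (f : nat -> R) (k : nat) : (0 < k)%nat ->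
  (forall i, f (i + k)%nat = f i) ->
  is_lim_seq (fun N => sum_n f N / INR (S N)) (sum_lt f k / INR k).
Proof.
  intros Hk Hf. assert (HkR : 0 < INR k) by (apply lt_0_INR; lia).
  set (e := fun N => sum_n f N - INR (S N) * (sum_lt f k / INR k)).
  assert (He : forall N, e (N + k)%nat = e N).
  { intro N. unfold e. rewrite !sum_n_sum_lt.
    replace (S (N + k)) with (S N + k)%nat by lia.
    rewrite sum_lt_add, sum_lt_periodic, plus_INR by exact Hf. field. lra. }
  set (B := sum_lt (fun i => Rabs (e i)) k).
  apply (is_lim_seq_ext (fun N => sum_lt f k / INR k + e N * / INR (S N))).
  - intro N. unfold e. field. split; [apply not_0_INR; discriminate | lra].
  - rewrite <- (Rplus_0_r (sum_lt f k / INR k)) at 1.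
    apply is_lim_seq_plus'; [apply is_lim_seq_const |].
    apply is_lim_seq_abs_0.
    apply is_lim_seq_le_le with (u := fun _ => 0) (w := fun N => 0 + B * / INR (S N)).
    + intro N. split; [apply Rabs_pos |].
      rewrite Rabs_mult, (Rabs_right (/ _)), Rplus_0_l
        by (left; apply Rinv_0_lt_compat, lt_0_INR; lia).
      apply Rmult_le_compat_r; [left; apply Rinv_0_lt_compat, lt_0_INR; lia |].
      apply periodic_bounded; assumption.
    + apply is_lim_seq_const.
    + apply is_lim_seq_plus_scal_inv_S.
Qed.

Lemma is_lim_seq_mean_periodic_S (f g : nat -> R) (k : nat) : (0 < k)%nat ->
  (forall i, g (i + k)%nat = g i) -> (forall j, f (S j) = g (S j)) ->
  is_lim_seq (fun N => sum_n f N / INR (S N)) (sum_lt g k / INR k).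
Proof.
  intros Hk Hg Hfg.
  apply (is_lim_seq_ext (fun N => sum_n g N / INR (S N) + (f 0%nat - g 0%nat) * / INR (S N))).
  - intro N. rewrite !sum_n_sum_lt, !sum_lt_Sl, (sum_lt_ext (fun i => f (S i)) (fun i => g (S i)))
      by (intros; apply Hfg).
    field. apply not_0_INR. discriminate.
  - rewrite <- (Rplus_0_r (sum_lt g k / INR k)).
    apply is_lim_seq_plus'; [apply is_lim_seq_mean_periodic; assumption |].
    rewrite <- (Rmult_0_r (f 0%nat - g 0%nat)).
    apply is_lim_seq_mult'; [apply is_lim_seq_const | apply is_lim_seq_inv_S].
Qed.

Lemma cheb_0_sq x : cheb 0 x ^ 2 = / PI.
Proof.
  unfold cheb. pose proof PI_RGT_0.
  rewrite pow_inv, pow2_sqrt by lra. reflexivity.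
Qed.

Lemma sum_cheb_sq_pos x N : 0 < sum_n (fun i => cheb i x ^ 2) N.
Proof.
  rewrite sum_n_sum_lt, sum_lt_Sl, cheb_0_sq. pose proof PI_RGT_0.
  pose proof (Rinv_0_lt_compat PI ltac:(lra)).
  pose proof (sum_lt_nonneg (fun i => cheb (S i) x ^ 2) N (fun i => pow2_ge_0 _)). lra.
Qed.

Lemma Dn_S_mean_form x N :
  Dn (S N) x =
  - ln (sum_n (fun i => cheb i x ^ 2) N / INR (S N))
  + (sum_n (fun i => cheb i x ^ 2 * ln (cheb i x ^ 2)) N / INR (S N))
    / (sum_n (fun i => cheb i x ^ 2) N / INR (S N)).
Proof.
  pose proof (sum_cheb_sq_pos x N) as HT.
  assert (HN : 0 < INR (S N)) by (apply lt_0_INR; lia).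
  unfold Dn, entropy, Psi, lambda_n. replace (S N - 1)%nat with N by lia.
  set (b := fun i => cheb i x ^ 2) in *.
  set (U := sum_n (fun i => b i * ln (b i)) N : R).
  change (sum_n (fun i => cheb i x ^ 2 * ln (cheb i x ^ 2)) N) with U.
  set (T := sum_n b N : R) in *.
  rewrite (sum_n_ext _ (fun i => / T * (b i * ln (b i)) + (- ln T * / T) * b i)).
  - rewrite sum_n_sum_lt, sum_lt_plus, !sum_lt_scal, <- !sum_n_sum_lt. fold T.
    fold U. rewrite ln_div by lra. field. lra.
  - intro i. change (/ T * b (S i - 1)%nat * ln (/ T * b (S i - 1)%nat)
                     = / T * (b i * ln (b i)) + - ln T * / T * b i).
    replace (S i - 1)%nat with i by lia.
    destruct (pow2_ge_0 (cheb i x) : 0 <= b i) as [Hb | Hb].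
    + rewrite ln_mult, ln_Rinv by (try apply Rinv_0_lt_compat; lra). ring.
    + rewrite <- Hb. ring.
Qed.

(** * Sums over the orbit of a rational rotation *)

Lemma sin_mul_sum_cos (a : R) (n : nat) :
  2 * sin (a / 2) * sum_lt (fun j => cos (INR j * a)) n
  = sin ((INR n - 1/2) * a) + sin (a / 2).
Proof.
  induction n.
  - simpl. replace ((0 - 1/2) * a) with (- (a / 2)) by field. rewrite sin_neg. ring.
  - simpl sum_lt. rewrite Rmult_plus_distr_l, IHn.
    replace ((INR (S n) - 1/2) * a) with (INR n * a + a / 2) by (rewrite S_INR; field).
    replace ((INR n - 1/2) * a) with (INR n * a - a / 2) by field.
    rewrite sin_plus, sin_minus. ring.
Qed.

Lemma sum_lt_alternating (a : nat -> R) N :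
  sum_lt (fun q => (-1)^(S q) * a (S q)) (2 * N)
  = 2 * sum_lt (fun p => a (2 * S p)%nat) N - sum_lt (fun q => a (S q)) (2 * N).
Proof.
  induction N; [simpl; ring |].
  replace (2 * S N)%nat with (S (S (2 * N))) by lia. cbn [sum_lt]. rewrite IHN.
  rewrite pow_1_odd.
  replace (S (S (2 * N))) with (2 * S N)%nat by lia. rewrite pow_1_even.
  replace (S (2 * N)) with (2 * N + 1)%nat by lia.
  replace (2 * S N)%nat with (S (2 * N + 1)) by lia. ring.
Qed.

Section Orbit.

Variables s k : nat.
Hypothesis s_pos : (0 < s)%nat.
Hypothesis s_lt_k : (s < k)%nat.
Hypothesis coprime_s_k : Nat.gcd s k = 1%nat.

Definition theta : R := PI * INR s / INR k.

Definition weight (j : nat) : R := 1 + cos (2 * (INR j * theta)).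

Definition unity_cos_sum (n : nat) : R :=
  sum_lt (fun j => cos (INR n * (2 * (INR j * theta)))) k.

Definition weighted_cos_sum (m : nat) : R :=
  sum_lt (fun j => weight j * cos (INR m * (2 * (INR j * theta)))) k.

(* [(1/k) sum_(j<k) weight j * a_m j], where [a_m j] is the [m]-th term of the Fourier series
   [log_cos_partial] at [phi = 2 j theta]. *)
Definition mean_fourier_term (m : nat) : R :=
  (-1)^m / INR (S m) * weighted_cos_sum (S m) / INR k.

(* The net contribution of the block boundary at index [q k]; it equals
   [1 / (q k ((q k)^2 - 1))]. *)
Definition block_defect (q : nat) : R :=
  / 2 / (INR q * INR k - 1) + / 2 / (INR q * INR k + 1) - / (INR q * INR k).

Definition weighted_log_mean : R :=
  sum_lt (fun j => weight j * (ln (2 + 2 * cos (2 * (INR j * theta))) / 2)) k / INR k.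

Lemma two_le_k : (2 <= k)%nat.
Proof. clear coprime_s_k. lia. Qed.

Lemma INR_k_ge_2 : 2 <= INR k.
Proof. apply (le_INR 2), two_le_k. Qed.

Lemma inv_INR_k_bounds : 0 < / INR k < 1.
Proof.
  pose proof INR_k_ge_2. split; [apply Rinv_0_lt_compat; lra |].
  rewrite <- Rinv_1. apply Rinv_lt_contravar; lra.
Qed.

Lemma weight_nonneg j : 0 <= weight j.
Proof. unfold weight. pose proof (COS_bound (2 * (INR j * theta))). lra. Qed.

Lemma weight_periodic j : weight (j + k) = weight j.
Proof.
  pose proof INR_k_ge_2. unfold weight.
  replace (2 * (INR (j + k) * theta)) with (2 * (INR j * theta) + 2 * INR s * PI)
    by (unfold theta; rewrite plus_INR; field; lra).
  rewrite cos_period. reflexivity.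
Qed.

Lemma unity_cos_sum_dvd n : Nat.divide k n -> unity_cos_sum n = INR k.
Proof.
  intros [q ->]. pose proof INR_k_ge_2. unfold unity_cos_sum.
  rewrite (sum_lt_ext _ (fun _ => 1)), sum_lt_const; [ring |].
  intros j _.
  replace (INR (q * k) * (2 * (INR j * theta))) with (0 + 2 * INR (q * j * s) * PI)
    by (unfold theta; rewrite !mult_INR; field; lra).
  rewrite cos_period. apply cos_0.
Qed.

(* Coprimality makes [sin (n theta) <> 0], and then [sin_mul_sum_cos] telescopes to [0]. *)
Lemma unity_cos_sum_ndvd n : ~ Nat.divide k n -> unity_cos_sum n = 0.
Proof.
  intro Hn. pose proof INR_k_ge_2. set (a := 2 * INR n * theta).
  assert (Hsin : sin (a / 2) <> 0).
  { intro H0. apply sin_eq_0_0 in H0. destruct H0 as [z Hz].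
    assert (E : INR (n * s) = IZR z * INR k).
    { rewrite mult_INR. apply (Rmult_eq_reg_r (PI / INR k)).
      - replace (IZR z * INR k * (PI / INR k)) with (IZR z * PI) by (field; lra).
        rewrite <- Hz. unfold a, theta. field. lra.
      - pose proof PI_RGT_0. apply Rgt_not_eq, Rdiv_lt_0_compat; lra. }
    rewrite INR_IZR_INZ, INR_IZR_INZ, <- mult_IZR in E. apply eq_IZR in E.
    apply Hn, (Nat.gauss _ s); [| rewrite Nat.gcd_comm; exact coprime_s_k].
    exists (Z.to_nat z). nia. }
  pose proof (sin_mul_sum_cos a k) as T.
  replace ((INR k - 1/2) * a) with (- (a / 2) + 2 * INR (n * s) * PI) in T
    by (unfold a, theta; rewrite mult_INR; field; lra).
  rewrite sin_period, sin_neg, Rplus_opp_l in T.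
  unfold unity_cos_sum. rewrite (sum_lt_ext _ (fun j => cos (INR j * a)))
    by (intros j _; f_equal; unfold a; ring).
  apply (Rmult_eq_reg_l (2 * sin (a / 2))); [rewrite T; ring | lra].
Qed.

Lemma unity_cos_sum_offset P i : (i < k)%nat ->
  unity_cos_sum (P * k + i) = if Nat.eqb i 0 then INR k else 0.
Proof.
  intro Hi. destruct (Nat.eqb_spec i 0) as [-> | Hi0].
  - apply unity_cos_sum_dvd. exists P. lia.
  - apply unity_cos_sum_ndvd. intro H.
    apply (Nat.divide_add_cancel_r _ (P * k)) in H; [| exists P; reflexivity].
    apply Nat.divide_pos_le in H; lia.
Qed.

Lemma unity_cos_sum_offset_S P i : (i < k)%nat ->
  unity_cos_sum (P * k + S i) = if Nat.eqb i (k - 1) then INR k else 0.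
Proof.
  intro Hi. destruct (Nat.eqb_spec i (k - 1)).
  - replace (P * k + S i)%nat with (S P * k + 0)%nat by lia.
    apply unity_cos_sum_offset. lia.
  - rewrite unity_cos_sum_offset by lia. reflexivity.
Qed.

Lemma unity_cos_sum_offset_SS P i : (i < k)%nat ->
  unity_cos_sum (P * k + S (S i)) = if Nat.eqb i (k - 2) then INR k else 0.
Proof.
  intro Hi. pose proof two_le_k.
  destruct (Nat.eqb_spec i (k - 2)), (Nat.eqb_spec i (k - 1)).
  - lia.
  - replace (P * k + S (S i))%nat with (S P * k + 0)%nat by lia.
    apply unity_cos_sum_offset. lia.
  - replace (P * k + S (S i))%nat with (S P * k + 1)%nat by lia.
    rewrite unity_cos_sum_offset by lia. reflexivity.
  - rewrite unity_cos_sum_offset by lia. reflexivity.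
Qed.

Lemma weighted_cos_sum_unity m : (1 <= m)%nat ->
  weighted_cos_sum m = unity_cos_sum m + / 2 * unity_cos_sum (S m)
                       + / 2 * unity_cos_sum (m - 1).
Proof.
  intro Hm. unfold weighted_cos_sum, unity_cos_sum.
  rewrite <- !sum_lt_scal, <- !sum_lt_plus. apply sum_lt_ext. intros j _.
  unfold weight. set (p := 2 * (INR j * theta)).
  replace (INR (S m) * p) with (INR m * p + p) by (rewrite S_INR; ring).
  replace (INR (m - 1) * p) with (INR m * p - p) by (rewrite minus_INR by lia; simpl; ring).
  rewrite cos_plus, cos_minus. field.
Qed.

(* By [weighted_cos_sum_unity], [mean_fourier_term m] vanishes unless [k] divides [m], [m + 1]
   or [m + 2]. *)
Lemma sum_mean_fourier_term_block P :
  sum_lt (fun i => mean_fourier_term (P * k + i)) k =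
  (-1)^(P * k + (k - 1)) / INR (S (P * k + (k - 1)))
  + / 2 * ((-1)^(P * k + (k - 2)) / INR (S (P * k + (k - 2))))
  + / 2 * ((-1)^(P * k + 0) / INR (S (P * k + 0))).
Proof.
  pose proof INR_k_ge_2. pose proof two_le_k.
  set (f := fun i => (-1)^(P * k + i) / INR (S (P * k + i))).
  rewrite (sum_lt_ext _ (fun i => f i * (if Nat.eqb i (k - 1) then 1 else 0)
     + / 2 * (f i * (if Nat.eqb i (k - 2) then 1 else 0))
     + / 2 * (f i * (if Nat.eqb i 0 then 1 else 0)))).
  - rewrite !sum_lt_plus, !sum_lt_scal, !sum_lt_indicator by lia. reflexivity.
  - intros i Hi. unfold mean_fourier_term. rewrite weighted_cos_sum_unity by lia.
    replace (S (P * k + i)) with (P * k + S i)%nat by lia.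
    replace (S (P * k + S i)) with (P * k + S (S i))%nat by lia.
    replace (P * k + S i - 1)%nat with (P * k + i)%nat by lia.
    rewrite unity_cos_sum_offset_S, unity_cos_sum_offset_SS, unity_cos_sum_offset by lia.
    unfold f. replace (P * k + S i)%nat with (S (P * k + i)) by lia.
    assert (INR (S (P * k + i)) <> 0) by (apply not_0_INR; lia).
    destruct (Nat.eqb i (k - 1)), (Nat.eqb i (k - 2)), (Nat.eqb i 0);
      field; split; lra.
Qed.

Lemma sum_mean_fourier_term_blocks P :
  sum_lt mean_fourier_term (P * k) =
  / 2 - / 2 * ((-1)^k)^P / (INR P * INR k + 1)
  + sum_lt (fun q => ((-1)^k)^(S q) * block_defect (S q)) P.
Proof.
  pose proof INR_k_ge_2. pose proof two_le_k.
  induction P; [simpl; field |].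
  replace (S P * k)%nat with (P * k + k)%nat by lia.
  rewrite sum_lt_add, IHP, sum_mean_fourier_term_block. cbn [sum_lt].
  assert (E1 : (-1)^(P * k + (k - 1)) = - ((-1)^k)^(S P)).
  { rewrite <- pow_mult. replace (k * S P)%nat with (S (P * k + (k - 1))) by lia.
    simpl. ring. }
  assert (E2 : (-1)^(P * k + (k - 2)) = ((-1)^k)^(S P)).
  { rewrite <- pow_mult. replace (k * S P)%nat with (S (S (P * k + (k - 2)))) by lia.
    simpl. ring. }
  assert (E0 : (-1)^(P * k + 0) = ((-1)^k)^P).
  { rewrite <- pow_mult. f_equal. lia. }
  rewrite E0, E1, E2.
  replace (INR (S (P * k + (k - 1)))) with ((INR P + 1) * INR k)
    by (replace (S (P * k + (k - 1))) with (S P * k)%nat by lia;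
        rewrite mult_INR, S_INR; ring).
  replace (INR (S (P * k + (k - 2)))) with ((INR P + 1) * INR k - 1)
    by (replace (S (P * k + (k - 2))) with (S P * k - 1)%nat by lia;
        rewrite minus_INR by lia; rewrite mult_INR, S_INR; simpl; ring).
  replace (INR (S (P * k + 0))) with (INR P * INR k + 1)
    by (rewrite S_INR, plus_INR, mult_INR; simpl; ring).
  unfold block_defect. rewrite S_INR. pose proof (pos_INR P).
  replace (((-1)^k)^(S P)) with ((-1)^k * ((-1)^k)^P) by reflexivity.
  set (X := sum_lt _ P). set (Y := ((-1)^k)^P). set (K := INR k). set (Q := INR P).
  clearbody X Y. field. unfold K, Q in *. repeat split; nra.
Qed.

Lemma sum_mean_fourier_term_eq M :
  sum_lt mean_fourier_term (S M)
  = / INR k * sum_lt (fun j => weight j * log_cos_partial (2 * (INR j * theta)) M) k.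
Proof.
  pose proof INR_k_ge_2. unfold log_cos_partial.
  rewrite (sum_lt_ext (fun j => weight j * sum_n _ M) (fun j => sum_lt (fun m => weight j * ((-1)^m
             * cos (INR (S m) * (2 * (INR j * theta))) / INR (S m))) (S M)))
    by (intros j _; rewrite sum_n_sum_lt, <- sum_lt_scal; reflexivity).
  rewrite sum_lt_swap, <- sum_lt_scal. apply sum_lt_ext. intros m _.
  unfold mean_fourier_term, weighted_cos_sum.
  assert (INR (S m) <> 0) by (apply not_0_INR; discriminate).
  replace ((-1)^m / INR (S m) * sum_lt _ k / INR k)
    with (/ INR k * ((-1)^m / INR (S m)) * sum_lt (fun j => weight j
            * cos (INR (S m) * (2 * (INR j * theta)))) k) by (field; lra).
  rewrite <- !sum_lt_scal. apply sum_lt_ext. intros j _. field. lra.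
Qed.

Lemma is_lim_seq_sum_mean_fourier_term :
  is_lim_seq (fun M => sum_lt mean_fourier_term (S M)) weighted_log_mean.
Proof.
  apply (is_lim_seq_ext _ _ _ (fun M => eq_sym (sum_mean_fourier_term_eq M))).
  unfold weighted_log_mean, Rdiv. rewrite Rmult_comm.
  apply is_lim_seq_mult'; [apply is_lim_seq_const |].
  apply (is_lim_seq_sum_lt (fun j M => weight j * log_cos_partial _ M)).
  intros j _. destruct (weight_nonneg j) as [Hw | Hw].
  - apply is_lim_seq_mult'; [apply is_lim_seq_const |].
    apply is_lim_seq_log_cos_partial. exact Hw.
  - rewrite <- Hw, Rmult_0_l.
    apply (is_lim_seq_ext (fun _ => 0)); [intro; ring | apply is_lim_seq_const].
Qed.

Lemma block_defect_Rfun_term n : block_defect (S n) = / 2 * Rfun_term (/ INR k) n.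
Proof.
  pose proof INR_k_ge_2. unfold block_defect, Rfun_term. pose proof (pos_INR n).
  rewrite S_INR. field. repeat split; nra.
Qed.

Lemma block_defect_double_Rfun_term n :
  block_defect (2 * S n) = / 2 * Rfun_term (/ (2 * INR k)) n.
Proof.
  pose proof INR_k_ge_2. unfold block_defect, Rfun_term. pose proof (pos_INR n).
  rewrite mult_INR, (S_INR n). change (INR 2) with (1 + 1). field. repeat split; nra.
Qed.

Lemma is_lim_seq_block_boundary :
  is_lim_seq (fun P => / 2 * ((-1)^k)^(S P) / (INR (S P) * INR k + 1)) 0.
Proof.
  pose proof INR_k_ge_2. apply is_lim_seq_abs_0.
  apply is_lim_seq_le_le with (u := fun _ => 0) (w := fun P => 0 + 1 * / INR (S P)).
  - intro P. split; [apply Rabs_pos |].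
    rewrite <- pow_mult. unfold Rdiv. rewrite !Rabs_mult, pow_1_abs.
    pose proof (pos_INR P). rewrite !S_INR.
    rewrite Rabs_right, (Rabs_right (/ _)) by (apply Rle_ge; try left;
      try apply Rinv_0_lt_compat; nra).
    rewrite Rmult_1_r, Rmult_1_l, Rplus_0_l.
    apply Rle_trans with (/ ((INR P + 1) * INR k + 1)).
    + assert (0 < / ((INR P + 1) * INR k + 1)) by (apply Rinv_0_lt_compat; nra). lra.
    + apply Rinv_le_contravar; nra.
  - apply is_lim_seq_const.
  - apply is_lim_seq_plus_scal_inv_S.
Qed.

Lemma is_lim_seq_sum_mean_fourier_blocks :
  is_lim_seq (fun P => sum_lt mean_fourier_term (S P * k)) weighted_log_mean.
Proof.
  pose proof two_le_k.
  refine (is_lim_seq_ext _ _ _ _ (is_lim_seq_subseq _ _ (fun P => (S P * k - 1)%nat) _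
            is_lim_seq_sum_mean_fourier_term)).
  - intro P. cbv beta. f_equal. lia.
  - apply eventually_subseq. intro n. simpl. nia.
Qed.

Lemma weighted_log_mean_even : Nat.Even k ->
  weighted_log_mean = / 2 + / 2 * Rfun (/ INR k).
Proof.
  intros [m Hm]. pose proof INR_k_ge_2.
  pose proof inv_INR_k_bounds.
  assert (Hsign : (-1)^k = 1) by (rewrite Hm; apply pow_1_even).
  apply (is_lim_seq_fin_unique _ _ _ is_lim_seq_sum_mean_fourier_blocks).
  apply (is_lim_seq_ext (fun P => (/ 2 - / 2 * ((-1)^k)^(S P) / (INR (S P) * INR k + 1))
                                  + / 2 * sum_n (Rfun_term (/ INR k)) P)).
  - intro P. rewrite sum_mean_fourier_term_blocks, sum_n_sum_lt, <- sum_lt_scal.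
    f_equal. apply sum_lt_ext. intros q _.
    rewrite Hsign, pow1, Rmult_1_l. symmetry. apply block_defect_Rfun_term.
  - replace (/ 2 + / 2 * Rfun (/ INR k)) with ((/ 2 - 0) + / 2 * Rfun (/ INR k)) by ring.
    apply is_lim_seq_plus'; [apply is_lim_seq_minus' |].
    + apply is_lim_seq_const.
    + apply is_lim_seq_block_boundary.
    + apply is_lim_seq_mult'; [apply is_lim_seq_const |]. apply is_series_Rfun. lra.
Qed.

Lemma weighted_log_mean_odd : Nat.Odd k ->
  weighted_log_mean = / 2 + Rfun (/ (2 * INR k)) - / 2 * Rfun (/ INR k).
Proof.
  intros [m Hm]. pose proof INR_k_ge_2.
  pose proof inv_INR_k_bounds.
  assert (Hy : -1 < / INR k < 1) by lra.
  assert (Hy2 : -1 < / (2 * INR k) < 1) by (rewrite Rinv_mult; lra).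
  assert (Hsign : (-1)^k = -1)
    by (rewrite Hm, Nat.add_1_r; apply pow_1_odd).
  set (odd_subseq := fun P => (2 * P + 1)%nat).
  assert (Hsub : filterlim odd_subseq eventually eventually)
    by (apply eventually_subseq; intro n; unfold odd_subseq; lia).
  apply (is_lim_seq_fin_unique _ _ _
           (is_lim_seq_subseq _ _ _ Hsub is_lim_seq_sum_mean_fourier_blocks)).
  apply (is_lim_seq_ext
    (fun P => (/ 2 - / 2 * ((-1)^k)^(S (odd_subseq P))
                     / (INR (S (odd_subseq P)) * INR k + 1))
              + (2 * (/ 2 * sum_n (Rfun_term (/ (2 * INR k))) P)
                 - / 2 * sum_n (Rfun_term (/ INR k)) (odd_subseq P)))).
  - intro P. rewrite sum_mean_fourier_term_blocks. f_equal.
    rewrite Hsign. unfold odd_subseq. replace (S (2 * P + 1)) with (2 * S P)%nat by lia.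
    assert (E1 : sum_lt (fun p => block_defect (2 * S p)) (S P)
                 = / 2 * sum_n (Rfun_term (/ (2 * INR k))) P).
    { rewrite sum_n_sum_lt, <- sum_lt_scal. apply sum_lt_ext. intros q _.
      apply block_defect_double_Rfun_term. }
    assert (E2 : sum_lt (fun q => block_defect (S q)) (2 * S P)
                 = / 2 * sum_n (Rfun_term (/ INR k)) (2 * P + 1)).
    { rewrite sum_n_sum_lt, <- sum_lt_scal. replace (S (2 * P + 1)) with (2 * S P)%nat by lia.
      apply sum_lt_ext. intros q _. apply block_defect_Rfun_term. }
    rewrite sum_lt_alternating, E1, E2. reflexivity.
  - replace (/ 2 + Rfun (/ (2 * INR k)) - / 2 * Rfun (/ INR k))
      with ((/ 2 - 0) + (2 * (/ 2 * Rfun (/ (2 * INR k))) - / 2 * Rfun (/ INR k)))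
      by field.
    apply is_lim_seq_plus'; [apply is_lim_seq_minus' | apply is_lim_seq_minus'].
    + apply is_lim_seq_const.
    + exact (is_lim_seq_subseq _ _ _ Hsub is_lim_seq_block_boundary).
    + do 2 (apply is_lim_seq_mult'; [apply is_lim_seq_const |]).
      apply is_series_Rfun. exact Hy2.
    + apply is_lim_seq_mult'; [apply is_lim_seq_const |].
      exact (is_lim_seq_subseq (sum_n (Rfun_term (/ INR k))) (Rfun (/ INR k)) _ Hsub
               (is_series_Rfun _ Hy)).
Qed.


Lemma acos_cos_theta : acos (cos theta) = theta.
Proof.
  pose proof PI_RGT_0. pose proof INR_k_ge_2.
  assert (INR s <= INR k) by (apply le_INR; lia). pose proof (pos_INR s).
  apply acos_cos. unfold theta. split.
  - apply Rmult_le_pos; [apply Rmult_le_pos |]; try lra.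
    left. apply Rinv_0_lt_compat. lra.
  - apply Rle_trans with (PI * INR k / INR k); [| right; field; lra].
    unfold Rdiv. apply Rmult_le_compat_r; [left; apply Rinv_0_lt_compat; lra |].
    apply Rmult_le_compat_l; lra.
Qed.

Lemma cheb_sq_theta j : cheb (S j) (cos theta) ^ 2 = weight (S j) / PI.
Proof.
  unfold cheb, weight. rewrite acos_cos_theta. pose proof PI_RGT_0.
  rewrite Rpow_mult_distr, pow2_sqrt by (apply Rlt_le, Rdiv_lt_0_compat; lra).
  rewrite cos_2a_cos. field. lra.
Qed.

Lemma sum_weight : sum_lt weight k = INR k.
Proof.
  transitivity (INR k * 1 + unity_cos_sum 1).
  - unfold weight, unity_cos_sum. rewrite sum_lt_plus, sum_lt_const. f_equal.
    apply sum_lt_ext. intros j _. f_equal. simpl. ring.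
  - rewrite (unity_cos_sum_ndvd 1) by (intros [[| d] Hd]; pose proof two_le_k; lia).
    ring.
Qed.

Lemma sum_weight_log_weight :
  sum_lt (fun j => weight j * ln (weight j)) k / INR k = 2 * weighted_log_mean - ln 2.
Proof.
  pose proof INR_k_ge_2. unfold weighted_log_mean.
  assert (E : forall j, (j < k)%nat -> weight j * ln (weight j) =
    2 * (weight j * (ln (2 + 2 * cos (2 * (INR j * theta))) / 2)) + - ln 2 * weight j).
  { intros j _. destruct (weight_nonneg j) as [Hw | Hw].
    - replace (2 + 2 * cos (2 * (INR j * theta))) with (2 * weight j) by (unfold weight; ring).
      rewrite ln_mult by lra. field.
    - rewrite <- Hw. ring. }
  rewrite (sum_lt_ext _ _ k E), sum_lt_plus, !sum_lt_scal, sum_weight. field. lra.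
Qed.

Lemma is_lim_seq_Dn_theta :
  is_lim_seq (fun n => Dn n (cos theta)) (2 * weighted_log_mean - ln 2).
Proof.
  pose proof PI_RGT_0. pose proof INR_k_ge_2. pose proof two_le_k.
  set (x := cos theta). set (b := fun i => cheb i x ^ 2). set (u := fun j => / PI * weight j).
  assert (Hu : forall i, u (i + k)%nat = u i)
    by (intro; unfold u; rewrite weight_periodic; reflexivity).
  assert (Hbu : forall j, b (S j) = u (S j))
    by (intro; unfold b, u, x; rewrite cheb_sq_theta; unfold Rdiv; apply Rmult_comm).
  assert (HT : is_lim_seq (fun N => sum_n b N / INR (S N)) (/ PI)).
  { replace (/ PI) with (sum_lt u k / INR k)
      by (unfold u; rewrite sum_lt_scal, sum_weight; field; lra).
    apply is_lim_seq_mean_periodic_S; [lia | exact Hu | exact Hbu]. }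
  assert (HB : is_lim_seq (fun N => sum_n (fun i => b i * ln (b i)) N / INR (S N))
                 (sum_lt (fun j => u j * ln (u j)) k / INR k)).
  { apply is_lim_seq_mean_periodic_S; [lia | intro; rewrite Hu; reflexivity |].
    intro j. rewrite Hbu. reflexivity. }
  replace (2 * weighted_log_mean - ln 2)
    with (- ln (/ PI) + (sum_lt (fun j => u j * ln (u j)) k / INR k) / / PI).
  - apply is_lim_seq_incr_1.
    apply (is_lim_seq_ext _ _ _ (fun N => eq_sym (Dn_S_mean_form x N))).
    apply is_lim_seq_plus'.
    + assert (Hln : continuity_pt ln (/ PI))
        by (apply continuity_pt_filterlim, continuous_ln, Rinv_0_lt_compat; lra).
      exact (proj1 (is_lim_seq_opp _ _) (is_lim_seq_continuous ln _ _ Hln HT)).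
    + apply is_lim_seq_div'; [exact HB | exact HT | apply Rinv_neq_0_compat; lra].
  - rewrite <- sum_weight_log_weight, ln_Rinv by lra.
    assert (E : forall j, (j < k)%nat ->
      u j * ln (u j) = / PI * (weight j * ln (weight j)) + - ln PI / PI * weight j).
    { intros j _. unfold u. destruct (weight_nonneg j) as [Hw | Hw].
      - rewrite ln_mult, ln_Rinv by (try apply Rinv_0_lt_compat; lra). field. lra.
      - rewrite <- Hw. ring. }
    rewrite (sum_lt_ext _ _ k E), sum_lt_plus, !sum_lt_scal, sum_weight. field. lra.
Qed.

End Orbit.

Theorem proposition1 (s k : nat) (x : R) :
  (0 < s)%nat -> (s < k)%nat -> Nat.gcd s k = 1%nat ->
  x = cos (PI * INR s / INR k) ->
  (Nat.Even k ->
     is_lim_seq (fun n => Dn n x) (1 - ln 2 + Rfun (/ INR k)) /\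
     1 - ln 2 + Rfun (/ INR k) > 1 - ln 2) /\
  (Nat.Odd k ->
     is_lim_seq (fun n => Dn n x)
       (1 - ln 2 + 2 * (Rfun (/ (2 * INR k)) - / 2 * Rfun (/ INR k))) /\
     1 - ln 2 + 2 * (Rfun (/ (2 * INR k)) - / 2 * Rfun (/ INR k)) < 1 - ln 2).
Proof.
  intros Hs Hsk Hg ->.
  pose proof (is_lim_seq_Dn_theta s k Hs Hsk Hg) as HD.
  pose proof (INR_k_ge_2 s k Hs Hsk) as Hk.
  pose proof (inv_INR_k_bounds s k Hs Hsk) as Hy.
  split; intro Hpar.
  - rewrite (weighted_log_mean_even s k Hs Hsk Hg Hpar) in HD. split.
    + replace (1 - ln 2 + Rfun (/ INR k)) with (2 * (/ 2 + / 2 * Rfun (/ INR k)) - ln 2)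
        by field.
      exact HD.
    + pose proof (Rfun_pos _ Hy). lra.
  - rewrite (weighted_log_mean_odd s k Hs Hsk Hg Hpar) in HD. split.
    + replace (1 - ln 2 + 2 * (Rfun (/ (2 * INR k)) - / 2 * Rfun (/ INR k)))
        with (2 * (/ 2 + Rfun (/ (2 * INR k)) - / 2 * Rfun (/ INR k)) - ln 2) by field.
      exact HD.
    + pose proof (Rfun_half_lt _ Hy) as Hlt.
      replace (/ INR k / 2) with (/ (2 * INR k)) in Hlt by (field; lra). lra.
Qed.
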